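(* Let $\{\xi_k\}$ be the sequence of parameters produced by Algorithm DFNDFL (described in the context) applied to $\min\{f(x): x\in X\cap\mathcal{Z}\}$. Then $\lim_{k\to\infty}\xi_k=0$.
   Context: Setting. $\{1,\dots,n\}=I^c\cup I^z$, $I^c\cap I^z=\emptyset$; for $v\in\mathbb{R}^n$, $v_c=(v_i)_{i\in I^c}$, $v_z=(v_i)_{i\in I^z}$. $l,u\in\mathbb{R}^n$ finite, $l_i<u_i$, $l_i,u_i\in\mathbb{Z}$ for $i\in I^z$; $X=\{x:l\le x\le u\}$; $\mathcal{Z}=\{x:x_i\in\mathbb{Z}\ \forall i\in I^z\}$; $[x]_{[l,u]}=\max\{l,\min\{u,x\}\}$ componentwise; $\|\cdot\|$ Euclidean. $f:\mathbb{R}^n\to\mathbb{R}$ is Lipschitz w.r.t. continuous variables: $\exists L>0$, $|f(x)-f(y)|\le L\|x-y\|$ whenever $x_z=y_z$. A vector in $\mathbb{Z}^p$ is primitive if the gcd of its components is 1. For $x\in X\cap\mathcal{Z}$: $D^z(x)=\{d\in\mathbb{Z}^n: d_i=0\ (i\in I^c),\ d_z \text{ primitive},\ x+d\in X\cap\mathcal{Z}\}$; $D^c(x)=\{s\in\mathbb{R}^n: s_i=0\ (i\in I^z),\ s_i\ge0 \text{ if } i\in I^c, x_i=l_i,\ s_i\le 0 \text{ if } i\in I^c, x_i=u_i\}$. Procedures (data $\gamma>0$, $\delta\in(0,1)$). PCS$(\tilde\alpha,w,p)$: set $\alpha=\tilde\alpha$; if $f([w+\alpha p]_{[l,u]})\le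 f(w)-\gamma\alpha^2$ set $\tilde p=p$, else if $f([w-\alpha p]_{[l,u]})\le f(w)-\gamma\alpha^2$ set $\tilde p=-p$, else return $(0,p)$; then repeat: $\beta=\alpha/\delta$; if $f([w+\beta\tilde p]_{[l,u]})>f(w)-\gamma\beta^2$ return $(\alpha,\tilde p)$, else $\alpha=\beta$. DS$(\tilde\alpha,w,p,\xi)$: let $\bar\alpha$ be the largest $\alpha\ge0$ with $w+\alpha p\in X\cap\mathcal{Z}$, set $\alpha=\min\{\bar\alpha,\tilde\alpha\}$; if not ($\alpha>0$ and $f(w+\alpha p)\le f(w)-\xi$) return $0$; otherwise, while $\alpha<\bar\alpha$ and $f(w+\min\{\bar\alpha,2\alpha\}p)\le f(w)-\xi$, set $\alpha=\min\{\bar\alpha,2\alpha\}$; then return $\alpha$. Algorithm DFNDFL. Data: $x_0\in X\cap\mathcal{Z}$, $\xi_0>0$, $\theta\in(0,1)$; a sequence $\{s_k\}$ with $s_k\in D^c(x_0)$, $\|s_k\|=1$; $\tilde\alpha^c_0=1$; a set $D_0\subset D^z(x_0)$ with $\tilde\alpha^{(d)}_0=1$ for $d\in D_0$; $D:=D_0$ (tentative steps $\tilde\alpha^{(d)}$ not updated in an iteration keep their value). For $k=0,1,\dots$: Phase 1: $(\alpha^c_k,\tilde s_k)=$PCS$(\tilde\alpha^c_k,x_k,s_k)$; if $\alpha^c_k=0$ set $\tilde\alpha^c_{k+1}=\theta\tilde\alpha^c_k$, $\tilde x_k=x_k$; else $\tilde\alpha^c_{k+1}=\alpha^c_k$, $\tilde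 x_k=[x_k+\alpha^c_k\tilde s_k]_{[l,u]}$. Phase 2.A: set $y^+=\tilde x_k$; while $D\ne\emptyset$ and $y^+=\tilde x_k$: choose $d\in D$, set $D=D\setminus\{d\}$, $y=y^+$, $\alpha=$DS$(\tilde\alpha^{(d)}_k,y,d,\xi_k)$; if $\alpha=0$ set $y^+=y$, $\tilde\alpha^{(d)}_{k+1}=\max\{1,\lfloor\tilde\alpha^{(d)}_k/2\rfloor\}$; else $y^+=y+\alpha d$, $\tilde\alpha^{(d)}_{k+1}=\alpha$. Phase 2.B: if $y^+=\tilde x_k$ and the Discrete Search failed (returned $0$) with $\tilde\alpha^{(d)}_k=1$ for all $d\in D_k$, then set $\xi_{k+1}=\theta\xi_k$ and: if $D_k\supseteq D^z(\tilde x_k)$ set $D_{k+1}=D_k$; otherwise generate $D_{k+1}$ with $D_{k+1}\subseteq D^z(\tilde x_k)$, $D_{k+1}\supset D_k$ (strictly), and set $\tilde\alpha^{(d)}_{k+1}=1$ for $d\in D_{k+1}\setminus D_k$. Otherwise set $D_{k+1}=D_k$ and $\xi_{k+1}=\xi_k$. In all cases set $D=D_{k+1}$. Phase 3: choose any $x_{k+1}\in X\cap\mathcal{Z}$ with $f(x_{k+1})\le f(y^+)$. *)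

From HB Require Import structures.
From mathcomp Require Import all_boot all_order all_algebra.
From mathcomp Require Import all_classical all_reals all_analysis.
Set Implicit Arguments. Unset Strict Implicit. Unset Printing Implicit Defensive.
Import Order.TTheory GRing.Theory Num.Theory.
Local Open Scope ring_scope.

Section DFNDFL.
Variables (R : realType) (n : nat).

Definition vec := 'I_n -> R.
Definition dir := {ffun 'I_n -> int}.

Definition dir_vec (d : dir) : vec := fun i => (d i)%:~R.

Definition axpy (w q : vec) (a : R) : vec := fun i => w i + a * q i.

Definition enorm (v : vec) : R := Num.sqrt (\sum_(i < n) v i ^+ 2).

Definition proj (l u x : vec) : vec := fun i => Num.max (l i) (Num.min (u i) (x i)).

Definition inX (l u x : vec) : Prop := forall i, l i <= x i <= u i.
Definition inZ (Iz : pred 'I_n) (x : vec) : Prop :=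
  forall i, i \in Iz -> x i \is a Num.int.
Definition inXZ Iz l u x := inX l u x /\ inZ Iz x.

Definition lipschitz_cont (Iz : pred 'I_n) (f : vec -> R) : Prop :=
  exists L : R, 0 < L /\ forall x y : vec, (forall i, i \in Iz -> x i = y i) ->
    `|f x - f y| <= L * enorm (fun i => x i - y i).

Definition inDz (Iz : pred 'I_n) (l u x : vec) (d : dir) : Prop :=
  (forall i, i \notin Iz -> d i = 0) /\
  (\big[gcdz/0]_(i | i \in Iz) d i = 1) /\
  inXZ Iz l u (axpy x (dir_vec d) 1).

Definition inDc (Iz : pred 'I_n) (l u x s : vec) : Prop :=
  (forall i, i \in Iz -> s i = 0) /\
  (forall i, i \notin Iz -> x i = l i -> 0 <= s i) /\
  (forall i, i \notin Iz -> x i = u i -> s i <= 0).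

(* PCS(at, w, p) returns (alpha, pt) : input/output specification of the loop *)
Definition PCS_spec (l u : vec) (f : vec -> R) (gamma delta : R)
    (at0 : R) (w p : vec) (alpha : R) (pt : vec) : Prop :=
  let acc (q : vec) (a : R) := f (proj l u (axpy w q a)) <= f w - gamma * a ^+ 2 in
  (~ acc p at0 /\ ~ acc (fun i => - p i) at0 /\ alpha = 0 /\ pt = p) \/
  ((acc p at0 /\ pt = p \/ ~ acc p at0 /\ acc (fun i => - p i) at0 /\ pt = (fun i => - p i)) /\
   exists j : nat,
     (forall i : nat, (i <= j)%N -> acc pt (at0 / delta ^+ i)) /\
     ~ acc pt (at0 / delta ^+ j.+1) /\
     alpha = at0 / delta ^+ j).

(* DS(at, w, p, xi) returns alpha : input/output specification of the procedure *)
Definition DS_spec (Iz : pred 'I_n) (l u : vec) (f : vec -> R)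
    (at0 : R) (w : vec) (d : dir) (xi : R) (alpha : R) : Prop :=
  let p := dir_vec d in
  exists abar : R,
    0 <= abar /\ inXZ Iz l u (axpy w p abar) /\
    (forall a, 0 <= a -> inXZ Iz l u (axpy w p a) -> a <= abar) /\
    let a0 := Num.min abar at0 in
    let sa (i : nat) := iter i (fun a => Num.min abar (2 * a)) a0 in
    let acc (a : R) := f (axpy w p a) <= f w - xi in
    ((~ (0 < a0 /\ acc a0)) /\ alpha = 0) \/
    (0 < a0 /\ acc a0 /\
     exists j : nat,
       (forall i : nat, (i < j)%N -> sa i < abar /\ acc (sa i.+1)) /\
       ~ (sa j < abar /\ acc (sa j.+1)) /\
       alpha = sa j).

(* Phase 2.A: L is the sequence of directions chosen (and removed) from D = D_k,
   ta is the tentative step before, ta' after Phase 2.A, yp = y^+. *)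
Definition phase2A_spec (Iz : pred 'I_n) (l u : vec) (f : vec -> R)
    (Dk : seq dir) (ta : dir -> R) (xt : vec) (xi : R)
    (L : seq dir) (yp : vec) (ta' : dir -> R) : Prop :=
  let halve (d : dir) : R := Num.max 1 ((Num.floor (ta d / 2))%:~R) in
  uniq L /\ {subset L <= Dk} /\
  (
    ({subset Dk <= L} /\
     (forall d, d \in L -> DS_spec Iz l u f (ta d) xt d xi 0) /\
     yp = xt /\
     (forall d, ta' d = if d \in L then halve d else ta d))
  \/
    (exists (L' : seq dir) (ds : dir) (alpha : R),
       L = rcons L' ds /\
       (forall d, d \in L' -> DS_spec Iz l u f (ta d) xt d xi 0) /\
       DS_spec Iz l u f (ta ds) xt ds xi alpha /\ alpha <> 0 /\
       yp = axpy xt (dir_vec ds) alpha /\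
       (forall d, ta' d = if d \in L' then halve d
                          else if d == ds then alpha else ta d))).

Definition DFNDFL_step (Iz : pred 'I_n) (l u : vec) (f : vec -> R)
    (gamma delta theta : R) (s : nat -> vec)
    (x xt : nat -> vec) (xi ac : nat -> R) (D : nat -> seq dir)
    (ta : nat -> dir -> R) (k : nat) : Prop :=
  exists (alc : R) (st : vec) (L : seq dir) (yp : vec) (tam : dir -> R),
    PCS_spec l u f gamma delta (ac k) (x k) (s k) alc st /\
    (alc = 0 -> ac k.+1 = theta * ac k /\ xt k = x k) /\
    (alc <> 0 -> ac k.+1 = alc /\ xt k = proj l u (axpy (x k) st alc)) /\
    phase2A_spec Iz l u f (D k) (ta k) (xt k) (xi k) L yp tam /\
    (let cond := yp = xt k /\ (forall d, d \in D k -> ta k d = 1) in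
     (cond ->
        xi k.+1 = theta * xi k /\
        ((forall d, inDz Iz l u (xt k) d -> d \in D k) ->
            D k.+1 =i D k /\ (forall d, ta k.+1 d = tam d)) /\
        (~ (forall d, inDz Iz l u (xt k) d -> d \in D k) ->
            (forall d, d \in D k.+1 -> inDz Iz l u (xt k) d) /\
            {subset D k <= D k.+1} /\ (exists d, d \in D k.+1 /\ d \notin D k) /\
            (forall d, ta k.+1 d = if (d \in D k.+1) && (d \notin D k) then 1 else tam d))) /\
     (~ cond ->
        D k.+1 =i D k /\ xi k.+1 = xi k /\ (forall d, ta k.+1 d = tam d))) /\
    inXZ Iz l u (x k.+1) /\ f (x k.+1) <= f yp.

Definition DFNDFL_run (Iz : pred 'I_n) (l u : vec) (f : vec -> R)
    (gamma delta : R) (x0 : vec) (xi0 theta : R) (s : nat -> vec) (D0 : seq dir)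
    (x xt : nat -> vec) (xi ac : nat -> R) (D : nat -> seq dir)
    (ta : nat -> dir -> R) : Prop :=
  inXZ Iz l u x0 /\ 0 < xi0 /\ 0 < theta < 1 /\
  (forall k, inDc Iz l u x0 (s k) /\ enorm (s k) = 1) /\
  (forall d, d \in D0 -> inDz Iz l u x0 d) /\
  x 0%N = x0 /\ xi 0%N = xi0 /\ ac 0%N = 1 /\ D 0%N = D0 /\
  (forall d, d \in D0 -> ta 0%N d = 1) /\
  (forall k, DFNDFL_step Iz l u f gamma delta theta s x xt xi ac D ta k).

End DFNDFL.

From Pilot Require Import Defs.
From HB Require Import structures.
From mathcomp Require Import all_boot all_order all_algebra.
From mathcomp Require Import all_classical all_reals all_analysis.
From mathcomp Require Import lra.
Set Implicit Arguments. Unset Strict Implicit. Unset Printing Implicit Defensive.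
Import Order.TTheory GRing.Theory Num.Theory numFieldNormedType.Exports.
Local Open Scope classical_set_scope.
Local Open Scope ring_scope.

(* The parameter xi is positive and nonincreasing, and it is multiplied by
   theta < 1 whenever Phase 2 fails with all tentative steps equal to 1, so it
   suffices that this happens infinitely often.  Otherwise, from some iteration
   on, xi and D stay fixed and every iteration either decreases f by the fixed
   amount xi, which can happen only finitely often since f is bounded below on
   X ∩ Z (finitely many integer parts, Lipschitz in the continuous ones), or
   fails in Phase 2 and halves every tentative step, which brings them all down
   to 1 after finitely many iterations. *)

Section RealSequences.
Variable R : archiRealFieldType.
Implicit Types (g : nat -> R) (B c theta : R).

Lemma nonincreasing_from {g K i j} : (forall k, (K <= k)%N -> g k.+1 <= g k) ->
  (K <= i)%N -> (i <= j)%N -> g j <= g i.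
Proof.
move=> gS Ki ij.
apply: (homo_leq_in (D := [pred k | K <= k]%N) (f := g) (r := fun a b => b <= a)) => //=.
- by move=> a b c ba cb; apply: le_trans cb ba.
- by move=> a b Ka _ m /andP[am _]; apply: leq_trans Ka (ltnW am).
- by move=> k Kk _; apply: gS.
- exact: leq_trans Ki ij.
Qed.

Lemma finitely_many_decreases g B c K0 : 0 < c -> (forall k, B <= g k) ->
    (forall k, (K0 <= k)%N -> g k.+1 <= g k) ->
  exists2 K1, (K0 <= K1)%N & forall k, (K1 <= k)%N -> g k - c < g k.+1.
Proof.
move=> c_gt0 gB gS; apply: contrapT => none.
have decrease m : exists2 k, (K0 <= k)%N & g k <= g K0 - m%:R * c.
  elim: m => [|m [k K0k gk]]; first by exists K0; rewrite // mul0r subr0.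
  have [k' kk' gk'] : exists2 k', (k <= k')%N & g k'.+1 <= g k' - c.
    apply: contrapT => nodec; apply: none; exists k => // k' kk'.
    by rewrite ltNge; apply/negP => gk'; apply: nodec; exists k'.
  exists k'.+1; first exact: leq_trans K0k (leqW kk').
  have := nonincreasing_from gS K0k kk'; rewrite -natr1 mulrDl mul1r; lra.
have [k _ gk] := decrease (Num.truncn ((g K0 - B) / c)).+1.
have := truncnS_gt ((g K0 - B) / c); rewrite ltr_pdivrMr // => large.
have := gB k; lra.
Qed.

Lemma cvg0_of_contractions (u : R^nat) theta : 0 <= theta < 1 ->
    (forall k, 0 <= u k) -> (forall k, u k.+1 <= u k) ->
    (forall K, exists2 k, (K <= k)%N & u k.+1 <= theta * u k) ->
  u k @[k --> \oo] --> (0 : R).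
Proof.
move=> /andP[theta_ge0 theta_lt1] u_ge0 uS contract.
have u_nonincr i j : (i <= j)%N -> u j <= u i.
  exact: nonincreasing_from (fun k _ => uS k) (leq0n i).
have u_geometric m : exists K, u K <= u 0%N * theta ^+ m.
  elim: m => [|m [K uK]]; first by exists 0%N; rewrite expr0 mulr1.
  have [k Kk uk] := contract K; exists k.+1.
  rewrite exprS mulrCA; apply: le_trans uk _; rewrite ler_wpM2l //.
  exact: le_trans (u_nonincr _ _ Kk) uK.
apply/cvgrPdist_lt => eps eps_gt0.
have := @cvg_geometric R (u 0%N) theta; rewrite ger0_norm // => /(_ theta_lt1).
move=> /cvgrPdist_lt /(_ eps eps_gt0) [M _ /(_ M (leqnn M))] /=.
rewrite sub0r normrN ger0_norm ?mulr_ge0 ?exprn_ge0 // => small.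
have [K uK] := u_geometric M; exists K => // k /= Kk.
rewrite sub0r normrN ger0_norm //.
exact: le_lt_trans (u_nonincr _ _ Kk) (le_lt_trans uK small).
Qed.

End RealSequences.

Section Halving.
Variable R : archiRealFieldType.
Implicit Types (t a c : R).

Definition halve t : R := Num.max 1 (Num.floor (t / 2))%:~R.

Lemma halve_ge1 t : 1 <= halve t.
Proof. by rewrite le_max lexx. Qed.

Lemma halve_le_max {t a} : t <= Num.max 1 a -> halve t <= Num.max 1 (a / 2).
Proof.
have floor_le_half := floor_le (t / 2).
rewrite ge_max !le_max lexx /= => /orP[t_le1|t_lea]; apply/orP; [left|right]; lra.
Qed.

Lemma iter_halve_le t j : iter j halve t <= Num.max 1 (t / 2 ^+ j).
Proof.
elim: j => [|j IH]; first by rewrite expr0 divr1 le_max lexx orbT.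
by rewrite iterS exprSr invfM mulrA; apply: halve_le_max.
Qed.

Lemma iter_halve_eq1 c : exists m, forall t, t <= c -> iter m.+1 halve t = 1.
Proof.
pose m := Num.truncn c; exists m => t t_le_c.
have c_lt_pow : c < 2 ^+ m.+1.
  apply: lt_le_trans (truncnS_gt c) _.
  by rewrite -natrX ler_nat ltnW // ltn_expl.
apply/le_anti; rewrite iterS halve_ge1 andbT.
apply: le_trans (halve_le_max (iter_halve_le t m)) _.
rewrite ge_max lexx -mulrA -invfM -exprSr ler_pdivrMr ?exprn_gt0 // mul1r.
lra.
Qed.

End Halving.

Arguments halve {R}.

Section LowerBound.
Variables (R : realType) (n : nat) (Iz : pred 'I_n) (l u : vec R n).
Hypothesis l_int : forall i, i \in Iz -> l i \is a Num.int.

Lemma enorm_le (v w : vec R n) : (forall i, `|v i| <= w i) -> enorm v <= enorm w.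
Proof.
move=> vw; rewrite /enorm ler_sqrt; last by apply: sumr_ge0 => i _; apply: sqr_ge0.
apply: ler_sum => i _; rewrite -real_normK ?num_real //.
have w_ge0 : 0 <= w i by apply: le_trans (vw i).
by apply: lerXn2r; rewrite ?nnegrE.
Qed.

Let N := (\sum_(i < n) Num.truncn (u i - l i))%N.

Lemma inXZ_integer_offset {z} : inXZ Iz l u z ->
  exists p : {ffun 'I_n -> 'I_N.+1}, forall i, i \in Iz -> z i = l i + (p i)%:R.
Proof.
move=> [zX zZ]; exists [ffun i => inord (Num.truncn (z i - l i))] => i iz.
have /andP[lz zu] := zX i.
have offset : (Num.truncn (z i - l i))%:R = z i - l i.
  by apply/eqP; rewrite -natrEtruncn natrEint rpredB ?zZ ?l_int // subr_ge0.
rewrite ffunE inordK; first by rewrite offset addrC subrK.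
rewrite ltnS; apply: leq_trans (le_truncn (_ : z i - l i <= u i - l i)) _.
  by rewrite lerD2r.
by rewrite /N (bigD1 i) //= leq_addr.
Qed.

Lemma lipschitz_cont_lbound f : lipschitz_cont Iz f ->
  exists B, forall z, inXZ Iz l u z -> B <= f z.
Proof.
move=> [L [L_gt0 f_lip]].
pose y (p : {ffun 'I_n -> 'I_N.+1}) : vec R n :=
  fun i => if i \in Iz then l i + (p i)%:R else l i.
exists (- \sum_p `|f (y p)| - L * enorm (fun i => u i - l i)) => z zXZ.
have [p zp] := inXZ_integer_offset zXZ.
have near_y : enorm (fun i => z i - y p i) <= enorm (fun i => u i - l i).
  apply: enorm_le => i; have /andP[lz zu] := zXZ.1 i.
  rewrite /y; case: ifP => [iz|_]; first by rewrite -zp // subrr normr0 subr_ge0 (le_trans lz).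
  by rewrite ger0_norm ?lerD2r // subr_ge0.
have fz : f (y p) - L * enorm (fun i => z i - y p i) <= f z.
  have : `|f z - f (y p)| <= L * enorm (fun i => z i - y p i).
    by apply: f_lip => i iz; rewrite /y iz zp.
  rewrite ler_norml => /andP[lo _]; lra.
have fy : - \sum_q `|f (y q)| <= f (y p).
  rewrite lerNl; apply: le_trans (ler_norm _) _.
  by rewrite normrN (bigD1 p) //= lerDl sumr_ge0.
have := ler_wpM2l (ltW L_gt0) near_y; lra.
Qed.

End LowerBound.

Section Procedures.
Variables (R : realType) (n : nat) (Iz : pred 'I_n) (l u : vec R n) (f : vec R n -> R).

Lemma PCS_spec_sufficient_decrease gamma delta at0 w p alpha pt :
    PCS_spec l u f gamma delta at0 w p alpha pt -> alpha <> 0 ->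
  f (Defs.proj l u (axpy w pt alpha)) <= f w - gamma * alpha ^+ 2.
Proof. by case=> [[_ [_ [-> _]]] //|[_ [j [acc [_ ->]]]] _]; apply: acc. Qed.

Lemma DS_spec_sufficient_decrease at0 w d xi alpha :
    DS_spec Iz l u f at0 w d xi alpha -> alpha <> 0 ->
  f (axpy w (dir_vec R d) alpha) <= f w - xi.
Proof.
move=> [abar [_ [_ [_ [[_ ->] //|[_ [acc0 [[|j] [acc [_ ->]]]]]]]]]] _ //.
exact: (acc j (ltnSn j)).2.
Qed.

Lemma phase2A_spec_cases Dk ta xt xi L yp ta' :
    phase2A_spec Iz l u f Dk ta xt xi L yp ta' ->
  (yp = xt /\ {in Dk, forall d, ta' d = halve (ta d)}) \/ f yp <= f xt - xi.
Proof.
move=> [_ [_ [[Dk_tried [_ [-> ta'E]]]|[L' [d [alpha [_ [_ [DS_d [alpha_neq0 [-> _]]]]]]]]]]].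
  by left; split=> // d dD; rewrite ta'E Dk_tried.
by right; apply: DS_spec_sufficient_decrease DS_d alpha_neq0.
Qed.

End Procedures.

Section Run.
Variables (R : realType) (n : nat) (Iz : pred 'I_n) (l u : vec R n) (f : vec R n -> R).
Variables (gamma delta theta : R) (s : nat -> vec R n) (x xt : nat -> vec R n).
Variables (xi ac : nat -> R) (D : nat -> seq (dir n)) (ta : nat -> dir n -> R).
Hypotheses (gamma_ge0 : 0 <= gamma) (theta_gt0 : 0 < theta) (theta_lt1 : theta < 1).
Hypothesis xi0_gt0 : 0 < xi 0%N.
Hypothesis step : forall k, DFNDFL_step Iz l u f gamma delta theta s x xt xi ac D ta k.

Definition halving_step k := {in D k, forall d, ta k.+1 d = halve (ta k d)} /\
  exists2 d, d \in D k & ta k d <> 1.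

Lemma xi_next k : xi k.+1 = theta * xi k \/ xi k.+1 = xi k.
Proof.
have [alc [st [L [yp [tam [_ [_ [_ [_ [[reduce keep] _]]]]]]]]]] := step k.
by case: (pselect (yp = xt k /\ {in D k, forall d, ta k d = 1})) =>
  [/reduce[-> _]|/keep[_ [-> _]]]; [left|right].
Qed.

Lemma xi_gt0 k : 0 < xi k.
Proof. by elim: k => // k IH; case: (xi_next k) => ->; rewrite ?mulr_gt0. Qed.

Lemma xi_nonincreasing k : xi k.+1 <= xi k.
Proof.
by case: (xi_next k) => ->; rewrite ?ler_piMl ?(ltW (xi_gt0 k)) ?(ltW theta_lt1).
Qed.

Lemma phase1_nonincreasing k : f (xt k) <= f (x k).
Proof.
have [alc [st [_ [_ [_ [PCS [alc_eq0 [alc_neq0 _]]]]]]]] := step k.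
have [/alc_eq0[_ ->] //|/[dup]/alc_neq0[_ ->]] := pselect (alc = 0).
move=> /(PCS_spec_sufficient_decrease PCS).
have : 0 <= gamma * alc ^+ 2 by rewrite mulr_ge0 ?sqr_ge0.
lra.
Qed.

Lemma step_without_reduction k : xi k.+1 <> theta * xi k ->
  [/\ f (x k.+1) <= f (x k), D k.+1 =i D k, xi k.+1 = xi k &
      f (x k.+1) <= f (x k) - xi k \/ halving_step k].
Proof.
move=> no_reduction.
have [alc [st [L [yp [tam [_ [_ [_ [phase2A [[reduce keep] [_ fx]]]]]]]]]]] := step k.
have phase1 := phase1_nonincreasing k; have xi_ge0 := ltW (xi_gt0 k).
have failed : ~ (yp = xt k /\ {in D k, forall d, ta k d = 1}).
  by move=> /reduce[/no_reduction].
have [DE [xiE taE]] := keep failed.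
have [[yp_xt halved]|decrease] := phase2A_spec_cases phase2A; last first.
  by split=> //; [lra|left; lra].
split=> //; first by rewrite yp_xt in fx; lra.
right; split=> [d dD|]; first by rewrite taE halved.
apply: contrapT => all_eq1; apply: failed; split=> // d dD.
by apply: contrapT => ne1; apply: all_eq1; exists d.
Qed.

Lemma halving_steps_stop K : ~ (forall k, (K <= k)%N -> D k.+1 =i D k /\ halving_step k).
Proof.
move=> halving.
have D_const j : D (K + j) =i D K.
  elim: j => [|j IH] d; first by rewrite addn0.
  by rewrite addnS (halving _ (leq_addr _ _)).1 IH.
have ta_iter j : {in D K, forall d, ta (K + j)%N d = iter j halve (ta K d)}.
  elim: j => [|j IH] d dD; first by rewrite addn0.
  by rewrite addnS (halving _ (leq_addr _ _)).2.1 ?D_const // IH.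
have [m iter_eq1] := iter_halve_eq1 (\sum_(d <- D K) `|ta K d|).
have [_ [d dD]] := (halving (K + m.+1)%N (leq_addr _ _)).2.
have dDK : d \in D K by rewrite -(D_const m.+1).
apply; rewrite ta_iter // iter_eq1 //.
apply: le_trans (ler_norm _) _.
by rewrite (big_rem d) //= lerDl sumr_ge0.
Qed.

Lemma xi_reduced_infinitely_often B : (forall k, B <= f (x k)) ->
  forall K, exists2 k, (K <= k)%N & xi k.+1 = theta * xi k.
Proof.
move=> fB K0; apply: contrapT => never.
have stall k (K0k : (K0 <= k)%N) :=
  step_without_reduction (fun reduced => never (ex_intro2 _ _ k K0k reduced)).
have xi_const k : (K0 <= k)%N -> xi k = xi K0.
  move=> /subnK <-; elim: (k - K0)%N => // j IH.
  by rewrite addSn; case: (stall (j + K0)%N (leq_addl _ _)) => _ _ ->.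
have f_nonincr k : (K0 <= k)%N -> f (x k.+1) <= f (x k) by case/stall.
have [K1 K01 small_decrease] := finitely_many_decreases (xi_gt0 K0) fB f_nonincr.
apply: (halving_steps_stop (K := K1)) => k K1k; have K0k := leq_trans K01 K1k.
have [_ DE _ [decrease|halved]] := stall k K0k; split=> //.
have := small_decrease k K1k; rewrite -(xi_const k K0k); lra.
Qed.

Lemma xi_cvg0 B : (forall k, B <= f (x k)) -> xi k @[k --> \oo] --> (0 : R).
Proof.
move=> fB; apply: (cvg0_of_contractions (theta := theta)).
- by rewrite ltW.
- by move=> k; apply/ltW/xi_gt0.
- exact: xi_nonincreasing.
- move=> K; have [k Kk xiE] := xi_reduced_infinitely_often fB K.
  by exists k; rewrite ?xiE.
Qed.

End Run.

Theorem mainTheorem3 (R : realType) (n : nat) (Iz : pred 'I_n) (l u : vec R n)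
    (f : vec R n -> R) (gamma delta : R) (x0 : vec R n) (xi0 theta : R)
    (s : nat -> vec R n) (D0 : seq (dir n))
    (x xt : nat -> vec R n) (xi ac : nat -> R) (D : nat -> seq (dir n))
    (ta : nat -> dir n -> R) :
  (forall i, l i < u i) ->
  (forall i, i \in Iz -> l i \is a Num.int /\ u i \is a Num.int) ->
  lipschitz_cont Iz f ->
  0 < gamma -> 0 < delta < 1 ->
  DFNDFL_run Iz l u f gamma delta x0 xi0 theta s D0 x xt xi ac D ta ->
  xi n @[n --> \oo] --> (0 : R).
Proof.
move=> _ lu_int f_lip /ltW gamma_ge0 _.
move=> [x0_XZ [xi0_gt0 [/andP[theta_gt0 theta_lt1] [_ [_ [x_0 [xi_0 [_ [_ [_ step]]]]]]]]]].
have [B fB] := lipschitz_cont_lbound u (fun i iz => (lu_int i iz).1) f_lip.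
have x_XZ k : inXZ Iz l u (x k).
  case: k => [|k]; first by rewrite x_0.
  by have [? [? [? [? [? [_ [_ [_ [_ [_ []]]]]]]]]]] := step k.
rewrite -{}xi_0 in xi0_gt0.
apply: (xi_cvg0 gamma_ge0 theta_gt0 theta_lt1 xi0_gt0 step (fun k => fB _ (x_XZ k))).
Qed.
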